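(* Equip $V^{5,2}$ with the Sasakian structure $\eta=X^1$, $\xi=X_1$, $\Phi$ ($\Phi X_1=0$, $\Phi X_i=-X_{i+3}$, $\Phi X_{i+3}=X_i$ for $i=2,3,4$), $g=4y_2^2Q|_{\mathfrak m_1}+y_2Q|_{\mathfrak m_2\oplus\mathfrak m_3}$ ($y_2>0$), and with a $\mathrm{G}_2$-structure $\varphi$ with parameters $x=a$, $y=b$, $z^2=4(a^2+b^2)^{4/3}$ inducing $g$. Let $E\to V^{5,2}$ be a Sasakian holomorphic vector bundle and $A$ its Chern connection. If $A$ is a $\mathrm{G}_2$-instanton, i.e. $\ast(\varphi\wedge F_A)=-F_A$, then $A$ is a self-dual contact instanton, i.e. $\ast(\eta\wedge\omega\wedge F_A)=F_A$ with $\omega=\frac12d\eta$.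
   Context: Basis of $\mathfrak{so}(5)$ (with $E_{ij}$ the elementary $5\times5$ matrices): $e_1=E_{12}-E_{21}$, $e_2=E_{13}-E_{31}$, $e_3=E_{14}-E_{41}$, $e_4=E_{15}-E_{51}$, $e_5=E_{23}-E_{32}$, $e_6=E_{24}-E_{42}$, $e_7=E_{25}-E_{52}$, $e_8=E_{34}-E_{43}$, $e_9=E_{35}-E_{53}$, $e_{10}=E_{54}-E_{45}$. $V^{5,2}=\mathrm{SO}(5)/\mathrm{SO}(3)$, $\mathrm{Lie}(\mathrm{SO}(3))=\mathrm{span}\{e_8,e_9,e_{10}\}$, $\mathfrak m=\mathrm{span}\{e_1,\dots,e_7\}$ identified with the tangent space at the origin; invariant tensors = $\mathrm{Ad}(\mathrm{SO}(3))$-invariant tensors on $\mathfrak m$. $Q(A,B)=\frac12\mathrm{tr}(AB^T)$, $\mathfrak m_1=\mathrm{span}\{e_1\}$, $\mathfrak m_2=\mathrm{span}\{e_2,e_3,e_4\}$, $\mathfrak m_3=\mathrm{span}\{e_5,e_6,e_7\}$. Orthonormal basis $X_1=e_1/(2y_2)$, $X_i=e_i/\sqrt{y_2}$ ($i=2,\dots,7$), dual coframe $X^i$; $\omega=X^{25}+X^{36}+X^{47}$. The $\mathrm{G}_2$-structure with parameters $(a,b,x,y,z)$ is the invariant 3-form $-z\,e^1\wedge(e^{25}+e^{36}+e^{47})+x\,e^{234}+a(-e^{267}+e^{357}-e^{456})+b(e^{237}-e^{246}+e^{345})-y\,e^{567}$. $\ast$ is the Hodge star of $g$ with the orientation induced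 by $\varphi$. A Sasakian holomorphic vector bundle (in the sense of Biswas–Schumacher) is a complex vector bundle with a transversely holomorphic structure compatible with the Sasakian structure; its Chern connection is the connection compatible with this holomorphic structure and a Hermitian metric, and its curvature is of type $(1,1)$ with respect to the transverse complex structure $\Phi|_H$ on $H=\ker\eta$ (with $dz^k=X^k+\sqrt{-1}X^{k+3}$, $k=2,3,4$, spanning the $(1,0)$-forms).
   Formalization: The parameter z of φ is positive, so among the solutions of $z^2=4(a^2+b^2)^{4/3}$ only the positive root is allowed. The statement above fails without it. *)

From HB Require Import structures.
From mathcomp Require Import all_boot all_order all_algebra.
From mathcomp Require Import reals exp.
Set Implicit Arguments. Unset Strict Implicit. Unset Printing Implicit Defensive.
Import Order.TTheory GRing.Theory Num.Theory.
Local Open Scope ring_scope.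

(* Pointwise exterior algebra on the 7-dimensional tangent space m of V^{5,2}.
   Index i : 'I_7 stands for the 1-based index i+1 of the context.
   A form (of any degree) with values in V is given by its coefficients
   with respect to the monomials X^I (I increasing), I : {set 'I_7}.  *)

Definition idx (n : nat) : 'I_7 := inord n.-1.

Definition form (R : realType) := {set 'I_7} -> R.
Definition vform (R : realType) (V : lmodType R) := {set 'I_7} -> V.

Section ExtAlg.
Variable R : realType.

(* sign of the shuffle: X^I /\ X^J = shsign I J X^(I u J) for disjoint I J *)
Definition shsign (I J : {set 'I_7}) : R :=
  (-1) ^+ #|[set p : 'I_7 * 'I_7 | [&& p.1 \in I, p.2 \in J & (p.2 < p.1)%N]]|.

Definition mono (I : {set 'I_7}) : form R := fun J => (J == I)%:R.
Definition mono1 (i : nat) : form R := mono [set idx i].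
Definition mono2 (i j : nat) : form R := mono [set idx i; idx j].
Definition mono3 (i j k : nat) : form R := mono [set idx i; idx j; idx k].

Definition fzero : form R := fun _ => 0.
Definition fadd (a b : form R) : form R := fun I => a I + b I.
Definition fscale (c : R) (a : form R) : form R := fun I => c * a I.

Definition wedge (a b : form R) : form R :=
  fun K => \sum_(I : {set 'I_7} | I \subset K) shsign I (K :\: I) * a I * b (K :\: I).

Definition wedgeV (V : lmodType R) (a : form R) (F : vform V) : vform V :=
  fun K => \sum_(I : {set 'I_7} | I \subset K) (shsign I (K :\: I) * a I) *: F (K :\: I).

(* Hodge star of the metric g for which X_1..X_7 is orthonormal, with
   orientation s * X^{1234567}  (s = 1 or -1):  *X^I = s shsign(I,I^c) X^{I^c}. *)
Definition hstar (V : lmodType R) (s : R) (F : vform V) : vform V :=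
  fun K => (s * shsign (~: K) K) *: F (~: K).

Definition contr (u : 'I_7) (a : form R) : form R :=
  fun I => if u \in I then 0 else shsign [set u] I * a (u |: I).

Definition topcoef (a : form R) : R := a [set: 'I_7].

(* phi induces the metric g (for which X_1..X_7 is orthonormal) and the
   orientation s * X^{1..7}:  (1/6) i_u phi /\ i_v phi /\ phi = g(u,v) vol_g,
   for all basis vectors u v  (Bryant's formula). *)
Definition induces_metric (phi : form R) (s : R) : Prop :=
  (s = 1 \/ s = -1) /\
  forall u v : 'I_7,
    topcoef (wedge (wedge (contr u phi) (contr v phi)) phi) / 6
    = s * (u == v)%:R.

(* The invariant 3-form with parameters (a,b,x,y,z), in the coframe e^1..e^7
   (restricted to m):
   -z e^1/\(e^25+e^36+e^47) + x e^234 + a(-e^267+e^357-e^456)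
   + b(e^237-e^246+e^345) - y e^567 *)
Definition phi_e (a b x y z : R) : form R :=
  fadd (fscale (- z) (fadd (mono3 1 2 5) (fadd (mono3 1 3 6) (mono3 1 4 7))))
  (fadd (fscale x (mono3 2 3 4))
  (fadd (fscale a (fadd (fscale (-1) (mono3 2 6 7)) (fadd (mono3 3 5 7) (fscale (-1) (mono3 4 5 6)))))
  (fadd (fscale b (fadd (mono3 2 3 7) (fadd (fscale (-1) (mono3 2 4 6)) (mono3 3 4 5))))
        (fscale (- y) (mono3 5 6 7))))).

(* Change of coframe: X_1 = e_1/(2 y2), X_i = e_i/sqrt y2 (i >= 2), hence
   e^1 = X^1/(2 y2), e^i = X^i / sqrt y2.  Converts e-coefficients into
   X-coefficients. *)
Definition ecoef (y2 : R) (i : 'I_7) : R :=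
  if i == idx 1 then (2 * y2)^-1 else (Num.sqrt y2)^-1.
Definition e_to_X (y2 : R) (a : form R) : form R :=
  fun I => a I * \prod_(i in I) ecoef y2 i.

Definition eta : form R := mono1 1.
Definition omega : form R := fadd (mono2 2 5) (fadd (mono2 3 6) (mono2 4 7)).

Definition vec := 'rV[R]_7.
Definition bvec (i : 'I_7) : vec := delta_mx 0 i.
Definition xi : vec := bvec (idx 1).

Definition Phi_b (i : 'I_7) : vec :=
  if i == idx 1 then 0
  else if i == idx 2 then - bvec (idx 5)
  else if i == idx 3 then - bvec (idx 6)
  else if i == idx 4 then - bvec (idx 7)
  else if i == idx 5 then bvec (idx 2)
  else if i == idx 6 then bvec (idx 3)
  else bvec (idx 4).
Definition Phi (u : vec) : vec := \sum_i u 0 i *: Phi_b i.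

Definition horizontal (u : vec) : Prop := u 0 (idx 1) = 0.

Definition eval2 (V : lmodType R) (F : vform V) (u v : vec) : V :=
  \sum_(i : 'I_7) \sum_(j : 'I_7 | (i < j)%N)
     (u 0 i * v 0 j - u 0 j * v 0 i) *: F [set i; j].

Definition is_2form (V : lmodType R) (F : vform V) : Prop :=
  forall I : {set 'I_7}, #|I| != 2 -> F I = 0.

(* F is a (V-valued) 2-form on H of type (1,1) w.r.t. the transverse complex
   structure Phi|_H: it is horizontal (i_xi F = 0) and Phi|_H-invariant,
   which for forms with values in a real vector space (e.g. End(E_p)) is
   exactly the vanishing of the (2,0)+(0,2) parts. *)
Definition type11 (V : lmodType R) (F : vform V) : Prop :=
  is_2form F /\
  (forall v : vec, eval2 F xi v = 0) /\
  (forall u v : vec, horizontal u -> horizontal v ->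
     eval2 F (Phi u) (Phi v) = eval2 F u v).

Definition G2_instanton (V : lmodType R) (s : R) (phi : form R) (F : vform V) : Prop :=
  hstar s (wedgeV phi F) = (fun I => - F I).
Definition SD_contact_instanton (V : lmodType R) (s : R) (F : vform V) : Prop :=
  hstar s (wedgeV (wedge eta omega) F) = F.

End ExtAlg.

(* In the frame X_1, ..., X_7 the 3-form is phi = c0 eta/\omega + al Re Omega + be Im Omega,
   where Omega = dz^2 /\ dz^3 /\ dz^4 and c0 = -z/(2 y2^2) < 0.  Bryant's formula for the
   metric, evaluated on (X_1, X_1), gives c0^3 = -s, hence s = 1 and c0 = -1.  A curvature
   form of type (1,1) is killed by wedging with the (3,0)+(0,3)-forms Re Omega and Im Omega,
   so phi /\ F = - eta /\ omega /\ F, and the G2-instanton equation *(phi /\ F) = -F becomes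
   *(eta /\ omega /\ F) = F. *)

From Pilot Require Import Defs.
From HB Require Import structures.
From mathcomp Require Import all_boot all_order all_algebra.
From mathcomp Require Import reals exp.
From mathcomp Require Import boolp functions.
From mathcomp Require Import ring lra zify.
Import Order.TTheory GRing.Theory Num.Theory.
Local Open Scope ring_scope.
Set Implicit Arguments. Unset Strict Implicit. Unset Printing Implicit Defensive.

Section FormAlgebra.
Variable R : realType.
Implicit Types (a b c : Defs.form R) (k : R).

Lemma wedge_faddr a b c : wedge a (fadd b c) = fadd (wedge a b) (wedge a c).
Proof.
apply/funext => K; rewrite /wedge /fadd -big_split /=.
by apply: eq_bigr => I _; rewrite mulrDr.
Qed.

Lemma wedge_fscalel k a b : wedge (fscale k a) b = fscale k (wedge a b).
Proof.
apply/funext => K; rewrite /wedge /fscale mulr_sumr.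
by apply: eq_bigr => I _; rewrite mulrCA !mulrA.
Qed.

Lemma wedge_fscaler k a b : wedge a (fscale k b) = fscale k (wedge a b).
Proof.
apply/funext => K; rewrite /wedge /fscale mulr_sumr.
by apply: eq_bigr => I _; rewrite mulrCA.
Qed.

Lemma contr_fadd u a b : contr u (fadd a b) = fadd (contr u a) (contr u b).
Proof. by apply/funext => I; rewrite /contr /fadd; case: ifP; rewrite ?addr0 ?mulrDr. Qed.

Lemma contr_fscale u k a : contr u (fscale k a) = fscale k (contr u a).
Proof. by apply/funext => I; rewrite /contr /fscale; case: ifP => _; rewrite ?mulr0 // mulrCA. Qed.

Lemma e_to_X_fadd (y2 : R) a b : e_to_X y2 (fadd a b) = fadd (e_to_X y2 a) (e_to_X y2 b).
Proof. by apply/funext => I; rewrite /e_to_X /fadd mulrDl. Qed.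

Lemma e_to_X_fscale (y2 : R) k a : e_to_X y2 (fscale k a) = fscale k (e_to_X y2 a).
Proof. by apply/funext => I; rewrite /e_to_X /fscale mulrA. Qed.

Lemma prod_ecoef (y2 : R) (I : {set 'I_7}) :
  \prod_(i in I) ecoef y2 i =
  (2 * y2)^-1 ^+ (idx 1 \in I) * (Num.sqrt y2)^-1 ^+ #|I :\ idx 1|.
Proof.
have ecoefE i : i != idx 1 -> ecoef y2 i = (Num.sqrt y2)^-1 by rewrite /ecoef => /negbTE ->.
rewrite -prodr_const; case: (boolP (idx 1 \in I)) => hI.
  rewrite (bigD1 (idx 1)) //= [ecoef _ _]/ecoef eqxx expr1; congr (_ * _).
  by apply: eq_big => [i | i /andP[_ /ecoefE]]; rewrite // !inE andbC.
rewrite expr0 mul1r; apply: eq_big => [i | i hi]; last by apply: ecoefE; apply: contraNneq hI => <-.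
by rewrite !inE; case: eqP => // ->; rewrite (negbTE hI).
Qed.

End FormAlgebra.

Section ValuedForms.
Variables (R : realType) (V : lmodType R).
Implicit Types (a : Defs.form R) (F : vform V) (k : R).

Lemma wedgeV_fadd a1 a2 F : wedgeV (fadd a1 a2) F = fun K => wedgeV a1 F K + wedgeV a2 F K.
Proof.
apply/funext => K; rewrite /wedgeV /fadd -big_split /=.
by apply: eq_bigr => I _; rewrite mulrDr scalerDl.
Qed.

Lemma wedgeV_fscale k a F : wedgeV (fscale k a) F = fun K => k *: wedgeV a F K.
Proof.
apply/funext => K; rewrite /wedgeV /fscale scaler_sumr.
by apply: eq_bigr => I _; rewrite scalerA mulrCA.
Qed.

Lemma wedgeV_expand (T : Type) (r : seq T) (b : T -> Defs.form R) (v : T -> V) a :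
  wedgeV a (fun J => \sum_(t <- r) b t J *: v t) =
  fun K => \sum_(t <- r) wedge a (b t) K *: v t.
Proof.
apply/funext => K; rewrite /wedgeV /wedge; under eq_bigr do rewrite scaler_sumr.
rewrite exchange_big; apply: eq_bigr => t _; rewrite scaler_suml.
by apply: eq_bigr => I _; rewrite scalerA.
Qed.

Lemma hstar_scale s k F : hstar s (fun K => k *: F K) = fun K => k *: hstar s F K.
Proof. by apply/funext => K; rewrite /hstar !scalerA mulrC. Qed.

End ValuedForms.

(** * Index sets as bit lists *)

Lemma val_idx n : (0 < n <= 7)%N -> val (idx n) = n.-1.
Proof. by case: n => // n /andP[_ h]; rewrite /idx /= inordK. Qed.

Lemma eq_idx (x : 'I_7) n : (0 < n <= 7)%N -> (x == idx n) = (x.+1 == n).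
Proof. by move=> hn; rewrite -val_eqE val_idx //; case: n hn. Qed.

Lemma idx_eq i j : (0 < i <= 7)%N -> (0 < j <= 7)%N -> (idx i == idx j) = (i == j).
Proof. by move=> hi hj; rewrite eq_idx // val_idx //; case: i hi. Qed.

Lemma lt_idx i j : (0 < i <= 7)%N -> (0 < j <= 7)%N -> (idx i < idx j)%N = (i < j)%N.
Proof. by move=> hi hj; rewrite !val_idx //; lia. Qed.

(* The finset operations are locked, so a set of indices is encoded by its list of
   membership bits, and a form with integer coefficients by a function on these lists;
   identities between such forms are then decided by vm_compute. *)
Definition code := seq bool.
Definition cform := code -> int.

Definition dec (c : code) : {set 'I_7} := [set i : 'I_7 | nth false c i].
Definition enc (A : {set 'I_7}) : code := mkseq (fun n => inord n \in A) 7.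

Lemma size_enc A : size (enc A) = 7%N.
Proof. exact: size_mkseq. Qed.

Lemma encK : cancel enc dec.
Proof. by move=> A; apply/setP => i; rewrite inE nth_mkseq // inord_val. Qed.

Lemma decK c : size c = 7%N -> enc (dec c) = c.
Proof.
move=> hc; apply: (@eq_from_nth _ false); first by rewrite size_enc hc.
by move=> n; rewrite size_enc => hn; rewrite nth_mkseq // inE inordK.
Qed.

Lemma enc_eq A c : size c = 7%N -> (enc A == c) = (A == dec c).
Proof. by move=> hc; apply/eqP/eqP => [<-|->]; rewrite ?encK ?decK. Qed.

Lemma card_dec c : size c = 7%N -> #|dec c| = count id c.
Proof.
move=> hc; rewrite cardE size_filter -[in RHS](mkseq_nth false c) hc /mkseq.
rewrite count_map -val_enum_ord count_map enumT.
by apply: eq_count => i; rewrite /= inE.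
Qed.

Lemma dec_head c : (idx 1 \in dec c) = head false c.
Proof. by rewrite inE val_idx //; case: c. Qed.

Lemma card_decD1 c : size c = 7%N -> #|dec c :\ idx 1| = count id (behead c).
Proof.
case: c => // b c [hc]; rewrite (_ : _ :\ _ = dec (false :: c)); first by rewrite card_dec //= hc.
by apply/setP => -[[|n] hn]; rewrite !inE -val_eqE val_idx.
Qed.

Fixpoint codes n : seq code :=
  if n is n.+1 then [seq b :: c | b <- [:: true; false], c <- codes n] else [:: [::]].

Lemma mem_codes n c : (c \in codes n) = (size c == n).
Proof.
elim: n c => [|n IH] c; first by case: c.
apply/allpairsP/idP => [[[b d] [_ hd ->]]|]; first by rewrite /= eqSS -IH.
by case: c => // b c; rewrite /= eqSS -IH => hc; exists (b, c); case: b.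
Qed.

Lemma uniq_codes n : uniq (codes n).
Proof.
elim: n => // n IH; apply: allpairs_uniq => //.
by move=> [b c] [b' c'] _ _ [-> ->].
Qed.

Lemma perm_codes : perm_eq (map dec (codes 7)) (enum {set 'I_7}).
Proof.
apply: uniq_perm; rewrite ?enum_uniq //.
  rewrite map_inj_in_uniq ?uniq_codes // => c d.
  by rewrite !mem_codes => /eqP hc /eqP hd hcd; rewrite -(decK hc) -(decK hd) hcd.
move=> A; rewrite mem_enum; apply/mapP.
by exists (enc A); rewrite ?encK // mem_codes size_enc.
Qed.

Lemma big_codes (M : nmodType) (P : pred {set 'I_7}) (f : {set 'I_7} -> M) :
  \sum_(I | P I) f I = \sum_(c <- codes 7 | P (dec c)) f (dec c).
Proof. by rewrite -(big_map dec P f) (perm_big _ perm_codes) big_enum_cond. Qed.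

Definition diffc (k c : code) : code := [seq p.1 && ~~ p.2 | p <- zip k c].
Definition subc (c k : code) : bool := ~~ has id (diffc c k).
Definition shc (c d : code) : nat :=
  sumn [seq sumn [seq nth false c i && nth false d j && (j < i)%N : nat
                 | j <- iota 0 7] | i <- iota 0 7].

Lemma nth_diffc k c i : size k = size c ->
  nth false (diffc k c) i = nth false k i && ~~ nth false c i.
Proof.
move=> hkc; case: (ltnP i (size k)) => hi.
  by rewrite (nth_map (false, false)) ?nth_zip // size_zip -hkc minnn.
by rewrite !nth_default ?size_map ?size_zip ?hkc ?minnn // -hkc.
Qed.

Lemma size_diffc k c : size k = 7%N -> size c = 7%N -> size (diffc k c) = 7%N.
Proof. by move=> hk hc; rewrite size_map size_zip hk hc. Qed.

Lemma dec_diffc k c : size k = 7%N -> size c = 7%N -> dec (diffc k c) = dec k :\: dec c.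
Proof. by move=> hk hc; apply/setP => i; rewrite !inE nth_diffc ?hk ?hc // andbC. Qed.

Lemma dec_eq0 c : size c = 7%N -> (dec c == set0) = ~~ has id c.
Proof. by move=> hc; rewrite -cards_eq0 card_dec // has_count lt0n negbK. Qed.

Lemma subc_dec c k : size c = 7%N -> size k = 7%N -> (dec c \subset dec k) = subc c k.
Proof. by move=> hc hk; rewrite -setD_eq0 -dec_diffc // dec_eq0 // size_diffc. Qed.

Lemma card_shuffle c d :
  #|[set p : 'I_7 * 'I_7 | [&& p.1 \in dec c, p.2 \in dec d & (p.2 < p.1)%N]]| = shc c d.
Proof.
transitivity (\sum_(i < 7) \sum_(j < 7) (nth false c i && nth false d j && (j < i)%N : nat))%N.
  by rewrite pair_bigA -sum1_card big_mkcond; apply: eq_bigr => p _; rewrite !inE andbA.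
rewrite /shc; change (iota 0 7) with (index_iota 0 7).
rewrite sumnE big_map big_mkord; apply: eq_bigr => i _.
by rewrite sumnE big_map big_mkord.
Qed.

(* Indices in [s] are counted from 1, as in X^1, ..., X^7. *)
Definition mkc (s : seq nat) : code := mkseq (fun n => n.+1 \in s) 7.

Lemma size_mkc s : size (mkc s) = 7%N.
Proof. exact: size_mkseq. Qed.

Lemma dec_mkc s : dec (mkc s) = [set x : 'I_7 | x.+1 \in s].
Proof. by apply/setP => x; rewrite !inE nth_mkseq. Qed.

Lemma dec_mkc1 i : (0 < i <= 7)%N -> dec (mkc [:: i]) = [set idx i].
Proof. by move=> hi; rewrite dec_mkc; apply/setP => x; rewrite !inE eq_idx. Qed.

Lemma dec_mkc2 i j : (0 < i <= 7)%N -> (0 < j <= 7)%N ->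
  dec (mkc [:: i; j]) = [set idx i; idx j].
Proof. by move=> hi hj; rewrite dec_mkc; apply/setP => x; rewrite !inE !eq_idx. Qed.

Lemma dec_mkc3 i j k : (0 < i <= 7)%N -> (0 < j <= 7)%N -> (0 < k <= 7)%N ->
  dec (mkc [:: i; j; k]) = [set idx i; idx j; idx k].
Proof. by move=> hi hj hk; rewrite dec_mkc; apply/setP => x; rewrite !inE !eq_idx // orbA. Qed.

Definition monoC (s : seq nat) : cform := fun c => (c == mkc s)%:R.

Definition wedgeC (a b : cform) : cform := fun k =>
  foldr +%R 0 [seq (-1) ^+ shc c (diffc k c) * a c * b (diffc k c) | c <- codes 7 & subc c k].

Definition contrC (a : cform) : cform := fun c =>
  if head false c then 0 else a (true :: behead c).

Section IntegerForms.
Variable R : realType.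
Implicit Types a b : cform.

Definition formR a : Defs.form R := fun I => (a (enc I))%:~R.

Lemma eq_formR a b : all (fun c => a c == b c) (codes 7) -> formR a = formR b.
Proof.
move/allP => hab; apply/funext => I; rewrite /formR.
by rewrite (eqP (hab _ _)) // mem_codes size_enc.
Qed.

Lemma formR_dec a c : size c = 7%N -> formR a (dec c) = (a c)%:~R.
Proof. by move=> hc; rewrite /formR decK. Qed.

Lemma formR_setT a : formR a setT = (a (nseq 7 true))%:~R.
Proof. by rewrite /formR /enc; under eq_mkseq do rewrite in_setT. Qed.

Lemma mono_formR s : mono R (dec (mkc s)) = formR (monoC s).
Proof.
by apply/funext => I; rewrite /mono /formR /monoC enc_eq ?size_mkc // rmorph_nat.
Qed.

Lemma shsign_dec c d : shsign R (dec c) (dec d) = ((-1) ^+ shc c d)%:~R.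
Proof. by rewrite /shsign card_shuffle rmorphXn rmorphN1. Qed.

Lemma wedge_formR a b : wedge (formR a) (formR b) = formR (wedgeC a b).
Proof.
apply/funext => K; rewrite /wedge /wedgeC [in RHS]/formR foldrE big_map big_filter rmorph_sum.
have hk : size (enc K) = 7%N := size_enc K.
rewrite -[in LHS](encK K) big_codes big_seq_cond [RHS]big_seq_cond.
apply: eq_big => [c | c /andP[]]; rewrite mem_codes; first by case: eqP => // hc; rewrite subc_dec.
by move=> /eqP hc _; rewrite -dec_diffc // shsign_dec !formR_dec ?size_diffc // !rmorphM.
Qed.

Lemma shsign_idx1 (I : {set 'I_7}) : shsign R [set idx 1] I = 1.
Proof.
rewrite /shsign (_ : [set p | _] = set0) ?cards0 //; apply/setP => -[i j].
by rewrite !inE /=; case: eqP => // ->; rewrite val_idx // ltn0 andbF.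
Qed.

Lemma contr_formR a : contr (idx 1) (formR a) = formR (contrC a).
Proof.
apply/funext => I; rewrite -(encK I); move: (enc I) (size_enc I) => [//|b c] [hc].
rewrite /contr /contrC formR_dec /= ?hc // inE val_idx //=; case: b => //.
rewrite shsign_idx1 mul1r -formR_dec /= ?hc //; congr (formR a _).
by apply/setP => -[[|n] hn]; rewrite !inE -val_eqE val_idx.
Qed.

Lemma contr_formR_eq0 a : all (fun c => contrC a c == 0) (codes 7) ->
  contr (idx 1) (formR a) = formR (fun=> 0).
Proof. by rewrite contr_formR; apply: eq_formR. Qed.

Lemma e_to_X_formR (y2 : R) a (h : bool) (n : nat) :
  all (fun c => (a c != 0) ==> (head false c == h) && (count id (behead c) == n)) (codes 7) ->
  e_to_X y2 (formR a) = fscale ((2 * y2)^-1 ^+ h * (Num.sqrt y2)^-1 ^+ n) (formR a).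
Proof.
move/allP => ha; apply/funext => I; rewrite /e_to_X /fscale -(encK I) formR_dec ?size_enc //.
move: (enc I) (size_enc I) (ha (enc I)) => c hc; rewrite mem_codes hc eqxx => /(_ isT).
case: eqP => [->|_ /andP[/eqP hh /eqP hn]]; first by rewrite mul0r mulr0.
by rewrite prod_ecoef dec_head card_decD1 // hh hn mulrC.
Qed.

End IntegerForms.

(** * The G2-structure of V^{5,2} *)

Definition etaC : cform := monoC [:: 1].
Definition omegaC : cform := monoC [:: 2; 5] + monoC [:: 3; 6] + monoC [:: 4; 7].
Definition eta_omegaC : cform := monoC [:: 1; 2; 5] + monoC [:: 1; 3; 6] + monoC [:: 1; 4; 7].
(* The real and imaginary parts of dz^2 /\ dz^3 /\ dz^4. *)
Definition reOmegaC : cform :=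
  monoC [:: 2; 3; 4] - monoC [:: 2; 6; 7] + monoC [:: 3; 5; 7] - monoC [:: 4; 5; 6].
Definition imOmegaC : cform :=
  monoC [:: 2; 3; 7] - monoC [:: 2; 4; 6] + monoC [:: 3; 4; 5] - monoC [:: 5; 6; 7].

Lemma wedgeC_eta_omega : all (fun c => wedgeC etaC omegaC c == eta_omegaC c) (codes 7).
Proof. by vm_compute. Qed.

Lemma contrC_eta_omega : all (fun c => contrC eta_omegaC c == omegaC c) (codes 7).
Proof. by vm_compute. Qed.

Lemma contrC_reOmega : all (fun c => contrC reOmegaC c == 0) (codes 7).
Proof. by vm_compute. Qed.

Lemma contrC_imOmega : all (fun c => contrC imOmegaC c == 0) (codes 7).
Proof. by vm_compute. Qed.

Lemma top_omega2_eta_omega : wedgeC (wedgeC omegaC omegaC) eta_omegaC (nseq 7 true) = -6.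
Proof. by vm_compute. Qed.

Lemma top_omega2_reOmega : wedgeC (wedgeC omegaC omegaC) reOmegaC (nseq 7 true) = 0.
Proof. by vm_compute. Qed.

Lemma top_omega2_imOmega : wedgeC (wedgeC omegaC omegaC) imOmegaC (nseq 7 true) = 0.
Proof. by vm_compute. Qed.

Lemma support_eta_omega :
  all (fun c => (eta_omegaC c != 0) ==> (head false c == true) && (count id (behead c) == 2%N))
    (codes 7).
Proof. by vm_compute. Qed.

Lemma support_reOmega :
  all (fun c => (reOmegaC c != 0) ==> (head false c == false) && (count id (behead c) == 3%N))
    (codes 7).
Proof. by vm_compute. Qed.

Lemma support_imOmega :
  all (fun c => (imOmegaC c != 0) ==> (head false c == false) && (count id (behead c) == 3%N))
    (codes 7).
Proof. by vm_compute. Qed.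

Section V52.
Variable R : realType.
Implicit Types (a b z : R).

Definition phiX (c0 al be : R) : Defs.form R :=
  fadd (fscale c0 (formR R eta_omegaC))
    (fadd (fscale al (formR R reOmegaC)) (fscale be (formR R imOmegaC))).

Lemma wedge_eta_omega : wedge (@Defs.eta R) (@Defs.omega R) = formR R eta_omegaC.
Proof.
rewrite /Defs.eta /Defs.omega /mono1 /mono2 -dec_mkc1 // -!dec_mkc2 // !mono_formR.
rewrite (_ : fadd _ _ = formR R omegaC); first by rewrite wedge_formR; apply: eq_formR wedgeC_eta_omega.
by apply/funext => I; rewrite /fadd /formR /omegaC !addrfctE !rmorphD addrA.
Qed.

Lemma phi_e_formR a b z :
  phi_e a b a b z =
  fadd (fscale (- z) (formR R eta_omegaC))
    (fadd (fscale a (formR R reOmegaC)) (fscale b (formR R imOmegaC))).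
Proof.
rewrite /phi_e /mono3 -!dec_mkc3 // !mono_formR; apply/funext => I.
rewrite /fadd /fscale /formR /eta_omegaC /reOmegaC /imOmegaC.
by rewrite !addrfctE !opprfctE /= !rmorphD !rmorphN; ring.
Qed.

Lemma e_to_X_phi (y2 : R) a b z :
  e_to_X y2 (phi_e a b a b z) =
  phiX (- z * ((2 * y2)^-1 * (Num.sqrt y2)^-1 ^+ 2))
    (a * (Num.sqrt y2)^-1 ^+ 3) (b * (Num.sqrt y2)^-1 ^+ 3).
Proof.
rewrite phi_e_formR !(e_to_X_fadd, e_to_X_fscale).
rewrite (e_to_X_formR _ support_eta_omega) (e_to_X_formR _ support_reOmega).
rewrite (e_to_X_formR _ support_imOmega).
by apply/funext => I; rewrite /phiX /fadd /fscale /=; ring.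
Qed.

End V52.

(** * Curvature forms of type (1,1) *)

Lemma sum_delta (R : pzRingType) (V : lmodType R) n (f : 'I_n -> V) (i : 'I_n) :
  \sum_k ((i == k)%:R : R) *: f k = f i.
Proof.
rewrite (bigD1 i) //= eqxx scale1r big1 ?addr0 // => k.
by rewrite eq_sym => /negbTE ->; rewrite scale0r.
Qed.

Definition horizontal2 (c : code) : bool := (count id c == 2%N) && ~~ head false c.

(* The Phi-invariance of a (1,1)-form identifies its coefficients on X^56 and X^23, ...;
   rep11 sends each horizontal 2-monomial to the one among basis11 it is identified with. *)
Definition rep11 (c : code) : code :=
  if c == mkc [:: 5; 6] then mkc [:: 2; 3] else
  if c == mkc [:: 5; 7] then mkc [:: 2; 4] else
  if c == mkc [:: 6; 7] then mkc [:: 3; 4] else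
  if c == mkc [:: 3; 5] then mkc [:: 2; 6] else
  if c == mkc [:: 4; 5] then mkc [:: 2; 7] else
  if c == mkc [:: 4; 6] then mkc [:: 3; 7] else c.

Definition basis11 : seq code :=
  map mkc [:: [:: 2; 5]; [:: 3; 6]; [:: 4; 7]; [:: 2; 3]; [:: 2; 4]; [:: 3; 4];
              [:: 2; 6]; [:: 2; 7]; [:: 3; 7]].

(* The real (1,1)-form with leading monomial b, e.g. X^23 + X^56 for b = X^23. *)
Definition beta11 (b : code) : cform := fun c => (horizontal2 c && (rep11 c == b))%:R.

Lemma rep11_basis11 : all (fun c => horizontal2 c ==> (rep11 c \in basis11)) (codes 7).
Proof. by vm_compute. Qed.

Lemma uniq_basis11 : uniq basis11.
Proof. by vm_compute. Qed.

(* A (3,0)+(0,3)-form times a (1,1)-form has type (4,1)+(1,4), which is zero in complex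
   dimension 3. *)
Lemma reOmega_wedge_beta11 :
  all (fun b => all (fun c => wedgeC reOmegaC (beta11 b) c == 0) (codes 7)) basis11.
Proof. by vm_compute. Qed.

Lemma imOmega_wedge_beta11 :
  all (fun b => all (fun c => wedgeC imOmegaC (beta11 b) c == 0) (codes 7)) basis11.
Proof. by vm_compute. Qed.

Section Type11.
Variables (R : realType) (V : lmodType R).
Implicit Types (F : vform V) (u v : vec R).

Lemma bvecE (i k : 'I_7) : bvec R i 0 k = (i == k)%:R.
Proof. by rewrite /bvec mxE eqxx /= eq_sym. Qed.

Lemma eval2C F u v : eval2 F u v = - eval2 F v u.
Proof.
rewrite /eval2 -sumrN; apply: eq_bigr => i _; rewrite -sumrN; apply: eq_bigr => j _.
by rewrite -scaleNr; congr (_ *: _); ring.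
Qed.

Lemma eval2Nl F u v : eval2 F (- u) v = - eval2 F u v.
Proof.
rewrite /eval2 -sumrN; apply: eq_bigr => i _; rewrite -sumrN; apply: eq_bigr => j _.
by rewrite -scaleNr !mxE; congr (_ *: _); ring.
Qed.

Lemma eval2Nr F u v : eval2 F u (- v) = - eval2 F u v.
Proof. by rewrite eval2C eval2Nl eval2C opprK. Qed.

Lemma sum_delta2 (G : 'I_7 -> 'I_7 -> V) (x y : 'I_7) :
  \sum_(k : 'I_7) \sum_(l : 'I_7 | (k < l)%N) (((x == k)%:R * (y == l)%:R : R) *: G k l) =
  ((x < y)%N%:R : R) *: G x y.
Proof.
under eq_bigr do under eq_bigr do rewrite -scalerA.
under eq_bigr do rewrite -scaler_sumr.
rewrite sum_delta big_mkcond /=.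
transitivity (\sum_(l : 'I_7) ((y == l)%:R : R) *: (((x < l)%N%:R : R) *: G x l)).
  by apply: eq_bigr => l _; case: ifP; rewrite ?scale1r ?scale0r ?scaler0.
by rewrite sum_delta.
Qed.

Lemma eval2_bvec F (i j : 'I_7) : (i < j)%N -> eval2 F (bvec R i) (bvec R j) = F [set i; j].
Proof.
move=> hij; rewrite /eval2.
transitivity
  (\sum_(k : 'I_7) \sum_(l : 'I_7 | (k < l)%N) (((i == k)%:R * (j == l)%:R : R) *: F [set k; l])
 - \sum_(k : 'I_7) \sum_(l : 'I_7 | (k < l)%N) (((j == k)%:R * (i == l)%:R : R) *: F [set k; l])).
  rewrite -sumrB; apply: eq_bigr => k _; rewrite -sumrB; apply: eq_bigr => l _.
  by rewrite !bvecE -scalerBl [(i == l)%:R * _]mulrC.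
by rewrite !sum_delta2 hij ltnNge (ltnW hij) scale1r scale0r subr0.
Qed.

Lemma Phi_bvec i : Phi (bvec R i) = Phi_b R i.
Proof. by rewrite /Phi; under eq_bigr do rewrite bvecE; rewrite sum_delta. Qed.

Lemma Phi_b_low i : (1 < i <= 4)%N -> Phi_b R (idx i) = - bvec R (idx (i + 3)).
Proof. by case: i => [|[|[|[|[|i]]]]] //= _; rewrite /Phi_b !idx_eq. Qed.

Lemma Phi_b_high i : (1 < i <= 4)%N -> Phi_b R (idx (i + 3)) = bvec R (idx i).
Proof. by case: i => [|[|[|[|[|i]]]]] //= _; rewrite /Phi_b !idx_eq. Qed.

Lemma type11_xi F j : type11 F -> j != idx 1 -> F [set idx 1; j] = 0.
Proof.
move=> [_ [hxi _]] hj; rewrite -(hxi (bvec R j)) /xi eval2_bvec // val_idx // lt0n.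
by apply: contraNneq hj => hj0; rewrite eq_idx // hj0.
Qed.

Lemma type11_Phi F i j : type11 F -> i != idx 1 -> j != idx 1 ->
  eval2 F (Phi_b R i) (Phi_b R j) = eval2 F (bvec R i) (bvec R j).
Proof.
move=> [_ [_ hPhi]] hi hj; rewrite -!Phi_bvec hPhi //.
  by rewrite /horizontal bvecE (negbTE hi).
by rewrite /horizontal bvecE (negbTE hj).
Qed.

Lemma type11_high F i j : type11 F -> (1 < i)%N -> (i < j <= 4)%N ->
  F [set idx (i + 3); idx (j + 3)] = F [set idx i; idx j].
Proof.
move=> hF hi hj; have [hi4 hj1] : (i <= 4)%N /\ (1 < j)%N by lia.
rewrite -!eval2_bvec ?lt_idx; try lia.
rewrite -[RHS](type11_Phi hF) ?idx_eq; try lia.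
by rewrite !Phi_b_low ?hi ?hi4 ?hj1 //; [rewrite eval2Nl eval2Nr opprK | lia].
Qed.

Lemma type11_mixed F i j : type11 F -> (1 < i <= 4)%N -> (1 < j <= 4)%N ->
  F [set idx j; idx (i + 3)] = F [set idx i; idx (j + 3)].
Proof.
move=> hF hi hj; rewrite -!eval2_bvec ?lt_idx; try lia.
rewrite -[RHS](type11_Phi hF) ?idx_eq; try lia.
by rewrite Phi_b_low // Phi_b_high // eval2Nl -eval2C.
Qed.

Lemma type11_rep F c : type11 F -> size c = 7%N ->
  F (dec c) = (horizontal2 c)%:R *: F (dec (rep11 c)).
Proof.
move=> hF hc; rewrite /rep11.
case: eqP => [->|_]; first by rewrite scale1r !dec_mkc2 // (type11_high hF (i := 2) (j := 3)).
case: eqP => [->|_]; first by rewrite scale1r !dec_mkc2 // (type11_high hF (i := 2) (j := 4)).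
case: eqP => [->|_]; first by rewrite scale1r !dec_mkc2 // (type11_high hF (i := 3) (j := 4)).
case: eqP => [->|_]; first by rewrite scale1r !dec_mkc2 // (type11_mixed hF (i := 2) (j := 3)).
case: eqP => [->|_]; first by rewrite scale1r !dec_mkc2 // (type11_mixed hF (i := 2) (j := 4)).
case: eqP => [->|_]; first by rewrite scale1r !dec_mkc2 // (type11_mixed hF (i := 3) (j := 4)).
case hk: (horizontal2 c); first by rewrite scale1r.
rewrite scale0r; case: (boolP (#|dec c| == 2%N)) => [hcard | ]; last by case: hF => h2 _; apply: h2.
move: hk; rewrite /horizontal2 -card_dec // hcard /= -dec_head => /negbFE h1.
case/cards2P: hcard => x [y [hxy hc2]]; rewrite hc2 !inE in h1 *.
case/orP: h1 => /eqP hx; rewrite -hx in hxy *; first by rewrite type11_xi // eq_sym.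
by rewrite setUC type11_xi.
Qed.

Lemma type11_expand F : type11 F ->
  F = fun J => \sum_(b <- basis11) formR R (beta11 b) J *: F (dec b).
Proof.
move=> hF; apply/funext => J; rewrite -(encK J); move: (enc J) (size_enc J) => c hc.
rewrite (type11_rep hF hc); under eq_bigr do rewrite formR_dec // /beta11 rmorph_nat.
case: (boolP (horizontal2 c)) => hk /=; last by rewrite scale0r big1 // => b _; rewrite scale0r.
have hrep : rep11 c \in basis11.
  by move/allP: rep11_basis11 => /(_ c); rewrite mem_codes hc eqxx hk; apply.
rewrite scale1r (big_rem _ hrep) /= eqxx scale1r big1_seq ?addr0 // => b /andP[_].
rewrite (mem_rem_uniq _ uniq_basis11) !inE => /andP[/negbTE hb _].
by rewrite eq_sym hb scale0r.
Qed.

Lemma wedgeV_type11 F f : type11 F ->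
  all (fun b => all (fun c => wedgeC f (beta11 b) c == 0) (codes 7)) basis11 ->
  wedgeV (formR R f) F = fun _ => 0.
Proof.
move=> hF /allP hf; rewrite {1}(type11_expand hF) wedgeV_expand; apply/funext => K.
apply: big1_seq => b /andP[_ hb].
by rewrite wedge_formR (@eq_formR R _ (fun=> 0) (hf b hb)) /formR rmorph0 scale0r.
Qed.

End Type11.

(** * Normalisation by the metric *)

Section Normalisation.
Variable R : realType.

Lemma contr_phiX (c0 al be : R) : contr (idx 1) (phiX c0 al be) = fscale c0 (formR R omegaC).
Proof.
rewrite /phiX !(contr_fadd, contr_fscale) (contr_formR_eq0 _ contrC_reOmega).
rewrite (contr_formR_eq0 _ contrC_imOmega) contr_formR (eq_formR _ contrC_eta_omega).
by apply/funext => I; rewrite /fadd /fscale /formR rmorph0 !mulr0 !addr0.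
Qed.

Lemma induces_metric_phiX (c0 al be s : R) :
  induces_metric (phiX c0 al be) s -> c0 ^+ 3 = - s.
Proof.
move=> [_ /(_ (idx 1) (idx 1))]; rewrite eqxx mulr1 contr_phiX.
rewrite wedge_fscalel wedge_fscaler wedge_formR /phiX.
rewrite !(wedge_faddr, wedge_fscaler, wedge_fscalel) !wedge_formR.
rewrite /topcoef /fadd /fscale !formR_setT.
rewrite top_omega2_eta_omega top_omega2_reOmega top_omega2_imOmega => <-.
by rewrite (_ : ((-6 : int)%:~R : R) = -6) //; field.
Qed.

Lemma cube_eqN1 (x : R) : x ^+ 3 = -1 -> x = -1.
Proof.
move=> h; have : (x + 1) * (x ^+ 2 - x + 1) = 0 by rewrite -(addNr 1) -h; ring.
by move/eqP; rewrite mulf_eq0 => /orP[|] /eqP e; [lra | nra].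
Qed.

Lemma induces_metric_normalised (c0 al be s : R) :
  c0 < 0 -> induces_metric (phiX c0 al be) s -> c0 = -1 /\ s = 1.
Proof.
move=> hc0 hm; have hcube := induces_metric_phiX hm; have [hs _] := hm.
have s1 : s = 1 by case: hs => // sN1; rewrite sN1 opprK in hcube; nra.
by split => //; apply: cube_eqN1; rewrite hcube s1.
Qed.

Lemma wedgeV_phiX (V : lmodType R) (F : vform V) (c0 al be : R) : type11 F ->
  wedgeV (phiX c0 al be) F = fun K => c0 *: wedgeV (wedge (@Defs.eta R) (@Defs.omega R)) F K.
Proof.
move=> hF; rewrite /phiX !(wedgeV_fadd, wedgeV_fscale) wedge_eta_omega.
rewrite (wedgeV_type11 hF reOmega_wedge_beta11) (wedgeV_type11 hF imOmega_wedge_beta11).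
by apply/funext => K; rewrite !scaler0 !addr0.
Qed.

End Normalisation.

Theorem lemma3p3 (R : realType) (a b z y2 : R) (s : R) (V : lmodType R)
    (F : vform V) :
  0 < y2 -> 0 < z ->
  z ^+ 2 = 4 * powR (a ^+ 2 + b ^+ 2) (4 / 3) ->
  induces_metric (e_to_X y2 (phi_e a b a b z)) s ->
  type11 F ->
  G2_instanton s (e_to_X y2 (phi_e a b a b z)) F ->
  SD_contact_instanton s F.
Proof.
move=> hy hz _; rewrite e_to_X_phi => hmet hF hG.
have hc0 : - z * ((2 * y2)^-1 * (Num.sqrt y2)^-1 ^+ 2) < 0.
  by rewrite mulNr oppr_lt0 !mulr_gt0 ?invr_gt0 ?exprn_gt0 ?sqrtr_gt0 ?mulr_gt0.
have [c0E _] := induces_metric_normalised hc0 hmet.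
apply/funext => K; have := congr1 (fun G => G K) hG.
by rewrite /G2_instanton (wedgeV_phiX _ _ _ hF) c0E hstar_scale scaleN1r => /oppr_inj.
Qed.
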